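(* Let $\mathcal{C}=\{C_1,\dots,C_m\}$ be a family of chargers and $\mathcal{R}=\{R_1,\dots,R_n\}$ a nonempty family ($n\ge 1$) of receivers, placed in the plane so that the placement constraints hold. If $\mathbf{x}^*\in[0,1]^m$ is an optimal solution to MAX-POWER, i.e. $\mathbf{x}^*\in\arg\max_{\mathbf{x}\in[0,1]^m} P(\mathcal{C}(\mathbf{x}),\mathcal{R})$, then $\mathbf{x}^*\in\{0,1\}^m$. In particular, there exists an optimal solution to MAX-POWER in which every charger operates either at full capacity ($\mathbf{x}_j=1$) or not at all ($\mathbf{x}_j=0$).
   Context: Fixed constants $\lambda>0$ (wavelength), $\beta>0$, $\gamma>0$. For a charger $C$ and receiver $R$ at Euclidean distance $d=\mathrm{dist}(C,R)$, the electric field vector is $\mathbf{E}(C,R)=\beta\cdot\frac{1}{d}\cdot\big(\cos(\tfrac{2\pi}{\lambda}d),\ \sin(\tfrac{2\pi}{\lambda}d)\big)^T\in\mathbb{R}^2$. A configuration is a vector $\mathbf{x}\in[0,1]^m$, $\mathbf{x}_j$ being the operation level of charger $C_j$. The power received by $R$ under configuration $\mathbf{x}$ is $P(\mathcal{C}(\mathbf{x}),R)=\gamma\,\big\|\sum_{j=1}^m \mathbf{x}_j\,\mathbf{E}(C_j,R)\big\|^2$ (Euclidean norm), and for a set $A$ of receivers $P(\mathcal{C}(\mathbf{x}),A)=\sum_{R\in A}P(\mathcal{C}(\mathbf{x}),R)$. Placement constraints: $\mathrm{dist}(C,R)\ge\lambda$ for every charger $C$ and receiver $R$, and $\mathrm{dist}(R,R')\ge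 \frac{\lambda}{2\pi}$ for every pair of distinct receivers $R,R'$. MAX-POWER: find $\mathbf{x}^*\in\arg\max_{\mathbf{x}\in[0,1]^m}P(\mathcal{C}(\mathbf{x}),\mathcal{R})$. *)

From HB Require Import structures.
From mathcomp Require Import all_boot all_order all_algebra.
From mathcomp Require Import all_classical all_reals all_analysis.
Set Implicit Arguments. Unset Strict Implicit. Unset Printing Implicit Defensive.
Import Order.TTheory GRing.Theory Num.Theory.
Local Open Scope ring_scope.

Definition dist {R : realType} (p q : R * R) : R :=
  Num.sqrt ((p.1 - q.1) ^+ 2 + (p.2 - q.2) ^+ 2).

Definition norm2 {R : realType} (v : R * R) : R :=
  Num.sqrt (v.1 ^+ 2 + v.2 ^+ 2).

Definition efield {R : realType} (lambda beta : R) (C Rc : R * R) : R * R :=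
  let d := dist C Rc in
  (beta * d^-1 * cos (2 * pi / lambda * d), beta * d^-1 * sin (2 * pi / lambda * d)).

Definition power_at {R : realType} (lambda beta gamma : R) (m : nat)
  (C : 'I_m -> R * R) (x : 'I_m -> R) (Rc : R * R) : R :=
  gamma * norm2 (\sum_(j < m) x j * (efield lambda beta (C j) Rc).1,
                 \sum_(j < m) x j * (efield lambda beta (C j) Rc).2) ^+ 2.

Definition power {R : realType} (lambda beta gamma : R) (m n : nat)
  (C : 'I_m -> R * R) (Rs : 'I_n -> R * R) (x : 'I_m -> R) : R :=
  \sum_(i < n) power_at lambda beta gamma C x (Rs i).

Definition in_cube {R : realType} (m : nat) (x : 'I_m -> R) : Prop :=
  forall j, 0 <= x j <= 1.

From HB Require Import structures.
From mathcomp Require Import all_boot all_order all_algebra.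
From mathcomp Require Import all_classical all_reals all_analysis.
From mathcomp Require Import ring lra.
Import Order.TTheory GRing.Theory Num.Theory.
Local Open Scope ring_scope.

(* Fix a charger j and move only its operation level t, all other levels
   being frozen.  Each field component seen by a receiver is then affine in
   t, so the received power is a quadratic in t whose leading coefficient is
   gamma * sum_i |E(C_j, R_i)|^2; this coefficient is positive because
   |E(C, R)| = beta / dist(C, R) and the distances are at least lambda > 0.
   A strictly convex function lies strictly below its chord, so it cannot
   attain its maximum over [0,1] at an interior point. *)

Lemma chord_gap_max_at_endpoint {R : realFieldType} (f : R -> R) {s : R} (t : R) :
  0 < s ->
  (1 - t) * f 0 + t * f 1 - f t = t * (1 - t) * s ->
  0 <= t <= 1 -> f 0 <= f t -> f 1 <= f t ->
  t = 0 \/ t = 1.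
Proof.
move=> s_gt0 gap /andP [t_ge0 t_le1] f0_le f1_le.
have [->|t_neq0] := eqVneq t 0; first by left.
have [->|t_neq1] := eqVneq t 1; first by right.
have t_gt0 : 0 < t by rewrite lt_neqAle eq_sym t_neq0.
have t_lt1 : 0 < 1 - t by rewrite subr_gt0 lt_neqAle t_neq1.
have gap_gt0 := mulr_gt0 (mulr_gt0 t_gt0 t_lt1) s_gt0.
have : (1 - t) * f 0 <= (1 - t) * f t by rewrite ler_pM2l.
have : t * f 1 <= t * f t by rewrite ler_pM2l.
lra.
Qed.

Lemma norm2_sqr (R : realType) (v : R * R) : norm2 v ^+ 2 = v.1 ^+ 2 + v.2 ^+ 2.
Proof. by rewrite /norm2 sqr_sqrtr // addr_ge0 // sqr_ge0. Qed.

Lemma norm2_efield (R : realType) (lambda beta : R) (C Rc : R * R) :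
  norm2 (efield lambda beta C Rc) ^+ 2 = (beta * (dist C Rc)^-1) ^+ 2.
Proof.
rewrite norm2_sqr /efield /=.
set th := 2 * pi / lambda * dist C Rc.
by rewrite !exprMn -mulrDr cos2Dsin2 mulr1.
Qed.

Definition update {R : realType} {m : nat} (x : 'I_m -> R) (j : 'I_m) (t : R)
  : 'I_m -> R := fun k => if k == j then t else x k.

Lemma in_cube_update (R : realType) (m : nat) (x : 'I_m -> R) (j : 'I_m) (t : R) :
  in_cube x -> 0 <= t <= 1 -> in_cube (update x j t).
Proof. by move=> x_cube t01 k; rewrite /update; case: eqP. Qed.

Lemma update_id (R : realType) (m : nat) (x : 'I_m -> R) (j : 'I_m) :
  update x j (x j) = x.
Proof. by apply: funext => k; rewrite /update; case: eqP => // ->. Qed.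

Lemma sum_update (R : realType) (m : nat) (x f : 'I_m -> R) (j : 'I_m) (t : R) :
  \sum_(k < m) update x j t k * f k = t * f j + \sum_(k < m | k != j) x k * f k.
Proof.
rewrite (bigD1 j) //= /update eqxx; congr (_ + _).
by apply: eq_bigr => k /negbTE ->.
Qed.

Lemma power_at_chord_gap (R : realType) (lambda beta gamma : R) (m : nat)
    (C : 'I_m -> R * R) (x : 'I_m -> R) (j : 'I_m) (Rc : R * R) (t : R) :
  (1 - t) * power_at lambda beta gamma C (update x j 0) Rc
  + t * power_at lambda beta gamma C (update x j 1) Rc
  - power_at lambda beta gamma C (update x j t) Rc =
  t * (1 - t) * (gamma * norm2 (efield lambda beta (C j) Rc) ^+ 2).
Proof.
by rewrite /power_at !norm2_sqr /= !sum_update; ring.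
Qed.

(* Leading coefficient of the total power as a quadratic in the level of
   charger j: gamma times the sum over receivers of |E(C_j, R_i)|^2. *)
Definition curvature {R : realType} (lambda beta gamma : R) {m n : nat}
  (C : 'I_m -> R * R) (Rs : 'I_n -> R * R) (j : 'I_m) : R :=
  \sum_(i < n) gamma * norm2 (efield lambda beta (C j) (Rs i)) ^+ 2.

Lemma power_chord_gap (R : realType) (lambda beta gamma : R) (m n : nat)
    (C : 'I_m -> R * R) (Rs : 'I_n -> R * R) (x : 'I_m -> R) (j : 'I_m) (t : R) :
  (1 - t) * power lambda beta gamma C Rs (update x j 0)
  + t * power lambda beta gamma C Rs (update x j 1)
  - power lambda beta gamma C Rs (update x j t) =
  t * (1 - t) * curvature lambda beta gamma C Rs j.
Proof.
rewrite /power /curvature !mulr_sumr -big_split -sumrB /=.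
by apply: eq_bigr => i _; exact: power_at_chord_gap.
Qed.

Lemma curvature_gt0 {R : realType} (lambda : R) {beta gamma : R} {m n : nat}
    (C : 'I_m -> R * R) (Rs : 'I_n -> R * R) (j : 'I_m) :
  0 < beta -> 0 < gamma -> (0 < n)%N ->
  (forall i, 0 < dist (C j) (Rs i)) ->
  0 < curvature lambda beta gamma C Rs j.
Proof.
move=> beta_gt0 gamma_gt0 n_gt0 dist_gt0.
have term_gt0 i : 0 < gamma * norm2 (efield lambda beta (C j) (Rs i)) ^+ 2.
  by rewrite norm2_efield mulr_gt0 // exprn_gt0 // mulr_gt0 // invr_gt0.
rewrite /curvature (bigD1 (Ordinal n_gt0)) //= ltr_pwDl //.
by apply: sumr_ge0 => i _; exact: ltW.
Qed.

Theorem lemma1 (R : realType) (lambda beta gamma : R)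
  (Hlambda : 0 < lambda) (Hbeta : 0 < beta) (Hgamma : 0 < gamma)
  (m n : nat) (Hn : (0 < n)%N)
  (C : 'I_m -> R * R) (Rs : 'I_n -> R * R)
  (HCR : forall j i, lambda <= dist (C j) (Rs i))
  (HRR : forall i k, i != k -> lambda / (2 * pi) <= dist (Rs i) (Rs k))
  (xs : 'I_m -> R)
  (Hxs : in_cube xs)
  (Hopt : forall x : 'I_m -> R, in_cube x ->
            power lambda beta gamma C Rs x <= power lambda beta gamma C Rs xs) :
  forall j, xs j = 0 \/ xs j = 1.
Proof.
move=> j.
pose P s := power lambda beta gamma C Rs (update xs j s).
have Pxs : P (xs j) = power lambda beta gamma C Rs xs by rewrite /P update_id.
have dist_gt0 i : 0 < dist (C j) (Rs i) by exact: lt_le_trans (HCR j i).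
have curv_gt0 := curvature_gt0 lambda C Rs j Hbeta Hgamma Hn dist_gt0.
apply: (chord_gap_max_at_endpoint P (xs j) curv_gt0).
- exact: power_chord_gap R lambda beta gamma m n C Rs xs j (xs j).
- exact: Hxs.
- by rewrite Pxs; apply/Hopt/in_cube_update; rewrite // lexx ler01.
- by rewrite Pxs; apply/Hopt/in_cube_update; rewrite // lexx ler01.
Qed.
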